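(* Let $R,R',R''$ be Hecke symmetries with the same parameter $q$ on finite dimensional spaces $V,V',V''$. Suppose that for each $n>1$ every indecomposable direct summand of the $\mathcal H_n$-module $V'^{\otimes n}$ is isomorphic to a direct summand of the $\mathcal H_n$-module $V^{\otimes n}$. Then the algebra homomorphism $\Delta_{R',R,R''}$ gives an isomorphism of algebras $A(R',R'')\cong A(R',R)\,\square_{A(R)}\,A(R,R'')$.
   Context: A Hecke symmetry with parameter $0\neq q\in\Bbbk$ on $V$ is an operator $R$ on $V\otimes V$ with $(R+\mathrm{id})(R-q\,\mathrm{id})=0$ and the braid relation; $V^{\otimes n}$ becomes an $\mathcal H_n(q)$-module with $T_i$ acting by $R$ on positions $i,i+1$. For Hecke symmetries $R_1,R_2$ (same $q$) on $W_1,W_2$, $A(R_2,R_1)$ is the quotient of $\mathbb T(W_2^*\otimes W_1)$ by the ideal generated by $\operatorname{Im}(\mathcal R-\mathrm{id})$, where $\mathcal R$ corresponds to $(R_2^* )^{-1}\otimes R_1$ under $(W_2^*\otimes W_1)^{\otimes2}\cong(W_2^* )^{\otimes2}\otimes W_1^{\otimes2}$ ($R_2^*$ the adjoint of $R_2$); one has $A_n(R_2,R_1)\cong\operatorname{Hom}_{\mathcal H_n}(W_1^{\otimes n},W_2^{\otimes n})^*$. $A(R)=A(R,R)$. The map $\Delta_{R',R,R''}:A(R',R'')\to A(R',R)\otimes A(R,R'')$ is defined in each degree $n$ as the map dual to composition $\operatorname{Hom}_{\mathcal H_n}(V^{\otimes n},V'^{\otimes n})\otimes\operatorname{Hom}_{\mathcal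 H_n}(V''^{\otimes n},V^{\otimes n})\to\operatorname{Hom}_{\mathcal H_n}(V''^{\otimes n},V'^{\otimes n})$; it is an algebra homomorphism, $A(R)$ is a bialgebra with comultiplication $\Delta_{R,R,R}$, and $A(R',R)$, $A(R,R'')$ are a right, resp. left, $A(R)$-comodule via $\Delta_{R',R,R}$, resp. $\Delta_{R,R,R''}$. For a coalgebra $C$, right comodule $X$ (coaction $\rho$) and left comodule $Y$ (coaction $\lambda$), the cotensor product $X\square_CY$ is the kernel of $\rho\otimes\mathrm{id}-\mathrm{id}\otimes\lambda:X\otimes Y\to X\otimes C\otimes Y$. *)

From HB Require Import structures.
From mathcomp Require Import all_boot all_order all_algebra.
Set Implicit Arguments. Unset Strict Implicit. Unset Printing Implicit Defensive.
Import GRing.Theory.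
Local Open Scope ring_scope.

(* Conventions: V = K^d, V^{(x)n} = K^(d^n); a linear operator on a space K^m
   is a square matrix acting on ROW vectors (v |-> v *m A), as in MathComp.
   Basis of a tensor product K^m (x) K^n = K^(m*n): e_i (x) e_j = e_(mxvec_index i j). *)

Section Defs.
Variable K : fieldType.

Definition kron m1 n1 m2 n2 (A : 'M[K]_(m1, n1)) (B : 'M[K]_(m2, n2))
  : 'M[K]_(m1 * m2, n1 * n2) :=
  \matrix_(i, j) \sum_(i1 < m1) \sum_(i2 < m2) \sum_(j1 < n1) \sum_(j2 < n2)
     (if (i == mxvec_index i1 i2) && (j == mxvec_index j1 j2)
      then A i1 j1 * B i2 j2 else 0).

(* The operator by which T_(i+1) (0-based i, acting on tensor positions i, i+1)
   of the Hecke algebra H_n acts on V^{(x)n}, for R an operator on V (x) V: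
   id_{V^{(x)i}} (x) R (x) id_{V^{(x)(n-i-2)}}  (meaningful for i + 2 <= n). *)
Definition heckeT (d n i : nat) (R : 'M[K]_(d * d)) : 'M[K]_(d ^ n) :=
  conform_mx 0 (kron (kron (1%:M : 'M[K]_(d ^ i)) R)
                     (1%:M : 'M[K]_(d ^ (n - i.+2)))).
Arguments heckeT {d} n i R.

Definition hecke_symmetry (d : nat) (q : K) (R : 'M[K]_(d * d)) : Prop :=
  q != 0 /\
  (R + 1%:M) *m (R - q%:M) = 0 /\
  heckeT 3 0 R *m heckeT 3 1 R *m heckeT 3 0 R
  = heckeT 3 1 R *m heckeT 3 0 R *m heckeT 3 1 R.
Arguments hecke_symmetry {d} q R.

Definition hecke_hom (d1 d2 n : nat) (R1 : 'M[K]_(d1 * d1)) (R2 : 'M[K]_(d2 * d2))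
  (F : 'M[K]_(d1 ^ n, d2 ^ n)) : Prop :=
  forall i, (i.+1 < n)%N -> heckeT n i R1 *m F = F *m heckeT n i R2.
Arguments hecke_hom {d1 d2} n R1 R2 F.

Definition hecke_submod (d n : nat) (R : 'M[K]_(d * d)) (U : 'M[K]_(d ^ n)) : Prop :=
  forall i, (i.+1 < n)%N -> stablemx U (heckeT n i R).
Arguments hecke_submod {d} n R U.

Definition hecke_summand (d n : nat) (R : 'M[K]_(d * d)) (U : 'M[K]_(d ^ n)) : Prop :=
  hecke_submod n R U /\
  exists W : 'M[K]_(d ^ n), hecke_submod n R W /\
    (U :&: W <= (0 : 'M[K]_(d ^ n)))%MS /\ (1%:M <= U + W)%MS.
Arguments hecke_summand {d} n R U.

Definition hecke_indec_summand (d n : nat) (R : 'M[K]_(d * d)) (U : 'M[K]_(d ^ n)) : Prop :=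
  hecke_summand n R U /\ U != 0 /\
  forall U1 U2 : 'M[K]_(d ^ n), hecke_submod n R U1 -> hecke_submod n R U2 ->
    (U1 :&: U2 <= (0 : 'M[K]_(d ^ n)))%MS -> (U1 + U2 == U)%MS -> U1 = 0 \/ U2 = 0.
Arguments hecke_indec_summand {d} n R U.

(* The submodule U of V1^{(x)n} is isomorphic (as H_n-module) to the
   submodule U' of V2^{(x)n}: some linear map f is injective on U, maps U onto U',
   and commutes with the action of every generator T_i on U. *)
Definition hecke_submod_iso (d1 d2 n : nat) (R1 : 'M[K]_(d1 * d1)) (R2 : 'M[K]_(d2 * d2))
  (U : 'M[K]_(d1 ^ n)) (U' : 'M[K]_(d2 ^ n)) : Prop :=
  exists f : 'M[K]_(d1 ^ n, d2 ^ n),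
    (U *m f == U')%MS /\ \rank (U *m f) = \rank U /\
    forall i, (i.+1 < n)%N -> forall u : 'rV[K]_(d1 ^ n), (u <= U)%MS ->
      u *m heckeT n i R1 *m f = u *m f *m heckeT n i R2.
Arguments hecke_submod_iso {d1 d2} n R1 R2 U U'.

Definition lin_form m n (phi : 'M[K]_(m, n) -> K) : Prop :=
  forall (c : K) x y, phi (c *: x + y) = c * phi x + phi y.
Arguments lin_form {m n} phi.

Definition bilin_form m1 n1 m2 n2 (beta : 'M[K]_(m1, n1) -> 'M[K]_(m2, n2) -> K) : Prop :=
  (forall y, lin_form (fun x => beta x y)) /\ (forall x, lin_form (beta x)).
Arguments bilin_form {m1 n1 m2 n2} beta.

(* Degree-n component of Delta_{R',R,R''}, with
   A_n(R',R'') = Hom_{H_n}(V''^n, V'^n)^*,  A_n(R',R) = Hom_{H_n}(V^n, V'^n)^*,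
   A_n(R,R'') = Hom_{H_n}(V''^n, V^n)^*, and
   A_n(R',R) (x) A_n(R,R'') = bilinear forms on Hom(V^n,V'^n) x Hom(V''^n,V^n):
   Delta(phi)(f, g) = phi(f o g), where f o g = G *m F in row convention. *)
Definition Delta_n (d d' d'' n : nat) (phi : 'M[K]_(d'' ^ n, d' ^ n) -> K)
  : 'M[K]_(d ^ n, d' ^ n) -> 'M[K]_(d'' ^ n, d ^ n) -> K :=
  fun F G => phi (G *m F).
Arguments Delta_n d {d' d'' n} phi F G.

(* beta lies in the degree-n part of the cotensor product
   A(R',R) \square_{A(R)} A(R,R''):  (rho (x) id) beta = (id (x) lambda) beta,
   i.e. beta(f o c, g) = beta(f, c o g) for all H_n-morphisms f, c, g. *)
Definition cotensor_n (d d' d'' n : nat) (R : 'M[K]_(d * d)) (R' : 'M[K]_(d' * d'))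
  (R'' : 'M[K]_(d'' * d''))
  (beta : 'M[K]_(d ^ n, d' ^ n) -> 'M[K]_(d'' ^ n, d ^ n) -> K) : Prop :=
  forall (F : 'M[K]_(d ^ n, d' ^ n)) (C : 'M[K]_(d ^ n, d ^ n)) (G : 'M[K]_(d'' ^ n, d ^ n)),
    hecke_hom n R R' F -> hecke_hom n R R C -> hecke_hom n R'' R G ->
    beta (C *m F) G = beta F (G *m C).
Arguments cotensor_n {d d' d''} n R R' R'' beta.

End Defs.

Arguments heckeT {K d} n i R.
Arguments hecke_symmetry {K d} q R.
Arguments hecke_hom {K d1 d2} n R1 R2 F.
Arguments hecke_submod {K d} n R U.
Arguments hecke_summand {K d} n R U.
Arguments hecke_indec_summand {K d} n R U.
Arguments hecke_submod_iso {K d1 d2} n R1 R2 U U'.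
Arguments lin_form {K m n} phi.
Arguments bilin_form {K m1 n1 m2 n2} beta.
Arguments Delta_n {K} d {d' d'' n} phi F G.
Arguments cotensor_n {K d d' d''} n R R' R'' beta.

(* By a Krull-Schmidt type induction on the rank, the hypothesis makes every
   H_n-direct summand of V'^n, and in particular V'^n itself, a retract of a
   finite direct sum of copies of V^n: id = sum_k f_k o g_k with H_n-morphisms
   g_k : V'^n -> V^n and f_k : V^n -> V'^n.  Given such a factorization, the
   inverse of Delta on the cotensor product is beta |-> (h |-> sum_k
   beta(f_k, g_k o h)), the cotensor condition being exactly what is needed to
   move g_k o h to the other side of beta.  For n <= 1 there are no relations,
   and the identity factors unless V = 0 and V' <> 0, which the hypothesis for
   n = 2 rules out. *)

From Pilot Require Import Defs.
From HB Require Import structures.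
From mathcomp Require Import all_boot all_order all_algebra.
From Stdlib Require Import Classical.
Import GRing.Theory.
Local Open Scope ring_scope.

Set Implicit Arguments.
Unset Strict Implicit.
Unset Printing Implicit Defensive.

Section DirectSums.
Variable K : fieldType.

Lemma submx_mulmx_id a b m (U : 'M[K]_(a, b)) (X : 'M_b) (M : 'M_(m, b)) :
  U *m X = U -> (M <= U)%MS -> M *m X = M.
Proof. by move=> UX /submxP[D ->]; rewrite -mulmxA UX. Qed.

Lemma rowwise_mulmx_eq a b m (U : 'M[K]_a) (X Y : 'M_(a, b)) (M : 'M_(m, a)) :
  (forall u : 'rV_a, (u <= U)%MS -> u *m X = u *m Y) ->
  (M <= U)%MS -> M *m X = M *m Y.
Proof.
move=> eqXY sMU; apply/row_matrixP => k; rewrite !row_mul; apply: eqXY.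
exact: submx_trans (row_sub k M) sMU.
Qed.

Lemma mxrank_mulmx_linv a b (U : 'M[K]_a) (f : 'M_(a, b)) :
  \rank (U *m f) = \rank U -> exists g : 'M_(b, a), U *m f *m g = U.
Proof.
move=> rUf; have eqBU := eq_row_base U; set B := row_base U in eqBU; clearbody B.
have /row_freeP[h Bfh] : row_free (B *m f).
  by rewrite /row_free (eqmxMr f eqBU) rUf.
exists (h *m B); suff BK m (M : 'M_(m, a)) : (M <= B)%MS -> M *m f *m (h *m B) = M.
  by apply: BK; rewrite eqBU.
by case/submxP=> D ->; rewrite !mulmxA -(mulmxA D) -(mulmxA D) Bfh mulmx1.
Qed.

Lemma direct_compl a (U U1 U2 W : 'M[K]_a) :
  (U1 :&: U2 <= (0 : 'M_a))%MS -> (U1 + U2 == U)%MS ->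
  (U :&: W <= (0 : 'M_a))%MS -> (1%:M <= U + W)%MS ->
  (U1 :&: (U2 + W) <= (0 : 'M_a))%MS /\ (1%:M <= U1 + (U2 + W))%MS.
Proof.
move=> c12 /andP[sU12 sUU12] cUW fUW; split; last first.
  by rewrite addsmxA (submx_trans fUW) // addsmxS.
set X := (U1 :&: (U2 + W))%MS.
have sXU1 : (X <= U1)%MS := capmxSl _ _.
have /sub_addsmxP[[y z] /= defX] : (X <= U2 + W)%MS := capmxSr _ _.
have zW0 : z *m W = 0.
  apply/eqP; rewrite -submx0 (submx_trans _ cUW) // sub_capmx submxMl andbT.
  have -> : z *m W = X - y *m U2 by rewrite defX addrAC subrr add0r.
  rewrite addmx_sub ?eqmx_opp // (submx_trans _ sU12) //.
    exact: submx_trans sXU1 (addsmxSl _ _).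
  exact: submx_trans (submxMl _ _) (addsmxSr _ _).
by apply: submx_trans c12; rewrite sub_capmx sXU1 /= defX zW0 addr0 submxMl.
Qed.

Lemma mulmx_proj_direct a m (U1 U2 W : 'M[K]_a) (M : 'M_(m, a)) :
  (U1 :&: (U2 + W) <= (0 : 'M_a))%MS -> (U2 :&: (U1 + W) <= (0 : 'M_a))%MS ->
  (M <= U1 + U2)%MS -> M *m (proj_mx U1 (U2 + W)%MS + proj_mx U2 (U1 + W)%MS) = M.
Proof.
rewrite !submx0 => /eqP c1 /eqP c2 /sub_addsmxP[[y z] /= ->].
have y1 : (y *m U1 <= U1 + W)%MS := submx_trans (submxMl _ _) (addsmxSl _ _).
have z2 : (z *m U2 <= U2 + W)%MS := submx_trans (submxMl _ _) (addsmxSl _ _).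
rewrite !mulmxDr !mulmxDl (proj_mx_id c1) ?submxMl // (proj_mx_0 c1 z2).
by rewrite (proj_mx_0 c2 y1) (proj_mx_id c2) ?submxMl // addr0 add0r.
Qed.

End DirectSums.

(* Modules are given by operators [T i] acting on row vectors, for the indices
   [i] with [gen i]; the Hecke notions of Defs are instances by conversion. *)
Section Intertwiners.
Variables (K : fieldType) (I : Type) (gen : I -> Prop).

Definition intertwines a b (TA : I -> 'M[K]_a) (TB : I -> 'M[K]_b) (F : 'M_(a, b)) :=
  forall i, gen i -> TA i *m F = F *m TB i.

Definition invariant a (T : I -> 'M[K]_a) (U : 'M_a) :=
  forall i, gen i -> stablemx U (T i).

Definition summand a (T : I -> 'M[K]_a) (U : 'M_a) :=
  invariant T U /\ exists W : 'M_a, invariant T W /\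
    (U :&: W <= (0 : 'M_a))%MS /\ (1%:M <= U + W)%MS.

Definition indec_summand a (T : I -> 'M[K]_a) (U : 'M_a) :=
  summand T U /\ U != 0 /\
  forall U1 U2 : 'M_a, invariant T U1 -> invariant T U2 ->
    (U1 :&: U2 <= (0 : 'M_a))%MS -> (U1 + U2 == U)%MS -> U1 = 0 \/ U2 = 0.

Definition submod_iso a b (TA : I -> 'M[K]_a) (TB : I -> 'M[K]_b)
    (U : 'M_a) (U' : 'M_b) :=
  exists f : 'M_(a, b),
    (U *m f == U')%MS /\ \rank (U *m f) = \rank U /\
    forall i, gen i -> forall u : 'rV_a, (u <= U)%MS ->
      u *m TA i *m f = u *m f *m TB i.

(* [U] is a retract of a finite direct sum of copies of the [TB]-module. *)
Definition factors_through a b (TA : I -> 'M[K]_a) (TB : I -> 'M[K]_b) (U : 'M_a) :=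
  exists2 s : seq ('M_(a, b) * 'M_(b, a)),
    {in s, forall p, intertwines TA TB p.1 /\ intertwines TB TA p.2} &
    U *m \sum_(p <- s) p.1 *m p.2 = U.

Lemma intertwinesM a b c (TA : I -> 'M[K]_a) (TB : I -> 'M_b) (TC : I -> 'M_c) F G :
  intertwines TA TB F -> intertwines TB TC G -> intertwines TA TC (F *m G).
Proof. by move=> hF hG i gi; rewrite mulmxA hF // -mulmxA hG // mulmxA. Qed.

Lemma invariant_adds a (T : I -> 'M[K]_a) U W :
  invariant T U -> invariant T W -> invariant T (U + W)%MS.
Proof. by move=> sU sW i gi; apply: stableDmx; [apply: sU | apply: sW]. Qed.

Lemma summand1 a (T : I -> 'M[K]_a) : summand T 1%:M.
Proof.
split; first by move=> i _; apply: submx1.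
exists 0; split; first by move=> i _; apply: stable0mx.
by rewrite capmx0 submx_refl addsmxSl.
Qed.

Lemma intertwines_proj a (T : I -> 'M[K]_a) (U W : 'M_a) :
  invariant T U -> invariant T W ->
  (U :&: W <= (0 : 'M_a))%MS -> (1%:M <= U + W)%MS -> intertwines T T (proj_mx U W).
Proof.
move=> sU sW; rewrite submx0 => /eqP cUW /sub_addsmxP[[x y] /= def1] i gi.
have projU m (M : 'M_(m, a)) : (M <= U)%MS -> M *m proj_mx U W = M := proj_mx_id cUW.
have projW m (M : 'M_(m, a)) : (M <= W)%MS -> M *m proj_mx U W = 0 := proj_mx_0 cUW.
set P := proj_mx U W in projU projW *; clearbody P.
have xUT : (x *m U *m T i <= U)%MS by rewrite -mulmxA mulmx_sub //; apply: sU.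
have yWT : (y *m W *m T i <= W)%MS by rewrite -mulmxA mulmx_sub //; apply: sW.
rewrite -[T i *m _]mul1mx -[P *m _]mul1mx def1 !mulmxDl !mulmxA.
by rewrite projU // projW // projU ?submxMl // projW ?submxMl // mul0mx.
Qed.

Lemma factors_through0 a b (TA : I -> 'M[K]_a) (TB : I -> 'M[K]_b) :
  factors_through TA TB 0.
Proof. by exists [::] => //; rewrite mul0mx. Qed.

Lemma factors_through_proj a b (TA : I -> 'M[K]_a) (TB : I -> 'M[K]_b)
    (U U1 U2 P1 P2 : 'M_a) :
  factors_through TA TB U1 -> factors_through TA TB U2 ->
  intertwines TA TA P1 -> intertwines TA TA P2 ->
  (P1 <= U1)%MS -> (P2 <= U2)%MS -> U *m (P1 + P2) = U ->
  factors_through TA TB U.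
Proof.
move=> [s1 hs1 e1] [s2 hs2 e2] hP1 hP2 sP1 sP2 eU.
exists ([seq (P1 *m p.1, p.2) | p <- s1] ++ [seq (P2 *m p.1, p.2) | p <- s2]).
  move=> p; rewrite mem_cat => /orP[] /mapP[x xs ->] /=.
    by have [h1 h2] := hs1 x xs; split; first exact: intertwinesM hP1 h1.
  by have [h1 h2] := hs2 x xs; split; first exact: intertwinesM hP2 h1.
rewrite big_cat !big_map /=.
under eq_bigr do rewrite -mulmxA; under [X in _ + X]eq_bigr do rewrite -mulmxA.
rewrite -!mulmx_sumr mulmxDr !mulmxA.
rewrite (submx_mulmx_id e1) ?(submx_mulmx_id e2) -?mulmxDr //.
  exact: submx_trans (submxMl _ _) sP2.
exact: submx_trans (submxMl _ _) sP1.
Qed.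

Lemma factors_through_iso a b (TA : I -> 'M[K]_a) (TB : I -> 'M[K]_b)
    (U : 'M_a) (U' : 'M_b) :
  summand TA U -> summand TB U' -> submod_iso TA TB U U' ->
  factors_through TA TB U.
Proof.
move=> [sU [W [sW [cUW fUW]]]] [sU' [W' [sW' [cUW' fUW']]]] [f [/andP[sUfU' sU'Uf] [rUf hf]]].
have [g fgK] := mxrank_mulmx_linv rUf.
have fgK_sub m (M : 'M_(m, a)) : (M <= U)%MS -> M *m f *m g = M.
  by move=> sMU; rewrite -mulmxA (submx_mulmx_id _ sMU) // mulmxA.
have hfM i m (M : 'M_(m, a)) : gen i -> (M <= U)%MS -> M *m TA i *m f = M *m f *m TB i.
  by move=> gi sMU; rewrite -!mulmxA; apply: rowwise_mulmx_eq sMU => u su; rewrite !mulmxA hf.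
have sPU : (proj_mx U W <= U)%MS by rewrite -[proj_mx U W]mul1mx proj_mx_sub.
have sP'Uf : (proj_mx U' W' <= U *m f)%MS.
  by rewrite (submx_trans _ sU'Uf) // -[proj_mx U' W']mul1mx proj_mx_sub.
have [c0 c0'] : (U :&: W = 0)%MS /\ (U' :&: W' = 0)%MS by split; apply/eqP; rewrite -submx0.
exists [:: (proj_mx U W *m f, proj_mx U' W' *m g)]; last first.
  rewrite big_seq1 /= mulmxA (mulmxA U) (proj_mx_id c0 (submx_refl U)).
  by rewrite mulmxA (proj_mx_id c0' sUfU').
move=> _ /[1!inE] /eqP -> /=; split=> i gi.
  by rewrite mulmxA (intertwines_proj sU sW) // hfM.
rewrite mulmxA (intertwines_proj sU' sW') //.
have /submxP[D ->] := sP'Uf; have sDU : (D *m U <= U)%MS := submxMl _ _.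
rewrite mulmxA -(hfM _ _ _ gi sDU) !fgK_sub //.
by rewrite -mulmxA mulmx_sub //; apply: sU.
Qed.

Lemma summand_factors_through a b (TA : I -> 'M[K]_a) (TB : I -> 'M[K]_b) :
  (forall U, indec_summand TA U ->
     exists U' : 'M_b, summand TB U' /\ submod_iso TA TB U U') ->
  forall U, summand TA U -> factors_through TA TB U.
Proof.
move=> indec_iso U; have [r] := ubnP (\rank U).
elim: r U => // r IH U /ltnSE rU hU; have [sU [W [sW [cUW fUW]]]] := hU.
have [->|U0] := eqVneq U 0; first exact: factors_through0.
case: (classic (exists U1 U2 : 'M_a, [/\ invariant TA U1, invariant TA U2,
   (U1 :&: U2 <= (0 : 'M_a))%MS, (U1 + U2 == U)%MS & (U1 != 0) && (U2 != 0)]))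
  => [[U1 [U2 [s1 s2 c12 e12 /andP[U10 U20]]]] | undecomposable].
  have [c1 f1] := direct_compl c12 e12 cUW fUW.
  have [c2 f2] : (U2 :&: (U1 + W) <= (0 : 'M_a))%MS /\ (1%:M <= U2 + (U1 + W))%MS.
    by apply: direct_compl cUW fUW; rewrite (capmxC, addsmxC).
  have rU12 : (\rank U1 + \rank U2)%N = \rank U.
    by rewrite -mxrank_disjoint_sum ?(eqmx_rank e12) //; apply/eqP; rewrite -submx0.
  have rU1 : (\rank U1 < \rank U)%N.
    by rewrite -rU12 -[X in (X < _)%N]addn0 ltn_add2l lt0n mxrank_eq0.
  have rU2 : (\rank U2 < \rank U)%N.
    by rewrite -rU12 -[X in (X < _)%N]add0n ltn_add2r lt0n mxrank_eq0.
  apply: (factors_through_proj (IH U1 _ _) (IH U2 _ _)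
           (intertwines_proj s1 (invariant_adds s2 sW) c1 f1)
           (intertwines_proj s2 (invariant_adds s1 sW) c2 f2)).
  - exact: leq_trans rU1 rU.
  - by split=> //; exists (U2 + W)%MS; split=> //; apply: invariant_adds.
  - exact: leq_trans rU2 rU.
  - by split=> //; exists (U1 + W)%MS; split=> //; apply: invariant_adds.
  - by rewrite -[proj_mx _ _]mul1mx proj_mx_sub.
  - by rewrite -[proj_mx _ _]mul1mx proj_mx_sub.
  by rewrite mulmx_proj_direct //; case/andP: e12.
have [U' [hU' iso]] : exists U' : 'M_b, summand TB U' /\ submod_iso TA TB U U'.
  apply: indec_iso; split=> //; split=> // U1 U2 s1 s2 c12 e12.
  have [->|U10] := eqVneq U1 0; [by left | have [->|U20] := eqVneq U2 0; [by right |]].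
  by case: undecomposable; exists U1, U2; split; rewrite ?U10.
exact: factors_through_iso iso.
Qed.

Lemma factors_through1_pos a b (TA : I -> 'M[K]_a) (TB : I -> 'M[K]_b) :
  factors_through TA TB 1%:M -> (0 < a)%N -> (0 < b)%N.
Proof.
case=> s _; rewrite mul1mx => es; rewrite !lt0n; apply: contra_neq => b0.
rewrite -(mxrank1 K a) -es big1 ?mxrank0 // => p _; apply/eqP.
by rewrite -mxrank_eq0 -leqn0 -b0 (leq_trans (mxrankM_maxl _ _)) ?rank_leq_col.
Qed.

Lemma factors_through1_nogen a b (TA : I -> 'M[K]_a) (TB : I -> 'M[K]_b) :
  (forall i, ~ gen i) -> ((0 < a)%N -> (0 < b)%N) -> factors_through TA TB 1%:M.
Proof.
move=> nogen pos_ab; have [a0 | /pos_ab b_gt0] := posnP a.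
  by exists [::] => //; apply/matrixP => i; have := ltn_ord i; rewrite {2}a0.
exists [seq (delta_mx i (Ordinal b_gt0), delta_mx (Ordinal b_gt0) i) | i : 'I_a].
  by move=> p _; split=> i /nogen.
by rewrite mul1mx big_map big_enum mx1_sum_delta; apply: eq_bigr => i _; apply: mul_delta_mx.
Qed.

End Intertwiners.

Section LinearForms.
Variables (K : fieldType) (m n : nat) (phi : 'M[K]_(m, n) -> K).
Hypothesis phi_lin : lin_form phi.

Lemma lin_form0 : phi 0 = 0.
Proof.
have := phi_lin 1 0 0; rewrite scaler0 addr0 mul1r => phi00.
by apply: (@addrI _ (phi 0)); rewrite addr0 -phi00.
Qed.

Lemma lin_form_sum (J : Type) (s : seq J) (F : J -> 'M[K]_(m, n)) :
  phi (\sum_(j <- s) F j) = \sum_(j <- s) phi (F j).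
Proof.
elim: s => [|j s IH]; first by rewrite !big_nil lin_form0.
by rewrite !big_cons -[F j]scale1r phi_lin mul1r scale1r IH.
Qed.

End LinearForms.

Notation hecke_gen n := (fun i : nat => (i.+1 < n)%N).
Notation hecke_ops n R := (fun i : nat => heckeT n i R).

Lemma hecke_homM (K : fieldType) n d1 d2 d3 (R1 : 'M[K]_(d1 * d1))
    (R2 : 'M[K]_(d2 * d2)) (R3 : 'M[K]_(d3 * d3)) F G :
  hecke_hom n R1 R2 F -> hecke_hom n R2 R3 G -> hecke_hom n R1 R3 (F *m G).
Proof. exact: (@intertwinesM K nat (hecke_gen n) _ _ _ (hecke_ops n R1) (hecke_ops n R2)). Qed.

Lemma Delta_n_cotensor (K : fieldType) d d' d'' n (R : 'M[K]_(d * d))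
    (R' : 'M[K]_(d' * d')) (R'' : 'M[K]_(d'' * d''))
    (phi : 'M[K]_(d'' ^ n, d' ^ n) -> K) :
  cotensor_n n R R' R'' (Delta_n d phi).
Proof. by move=> F C G _ _ _; rewrite /Delta_n mulmxA. Qed.

Section DeltaInverse.
Variables (K : fieldType) (d d' d'' n : nat).
Variables (R : 'M[K]_(d * d)) (R' : 'M[K]_(d' * d')) (R'' : 'M[K]_(d'' * d'')).
Variable s : seq ('M[K]_(d' ^ n, d ^ n) * 'M[K]_(d ^ n, d' ^ n)).
Hypothesis s_hom : {in s, forall p, hecke_hom n R' R p.1 /\ hecke_hom n R R' p.2}.
Hypothesis s_id : \sum_(p <- s) p.1 *m p.2 = 1%:M.

Lemma Delta_n_inj (phi : 'M[K]_(d'' ^ n, d' ^ n) -> K) :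
  lin_form phi ->
  (forall F G, hecke_hom n R R' F -> hecke_hom n R'' R G -> Delta_n d phi F G = 0) ->
  forall H, hecke_hom n R'' R' H -> phi H = 0.
Proof.
move=> phi_lin Delta0 H hH; rewrite -[H]mulmx1 -s_id mulmx_sumr lin_form_sum //.
rewrite big_seq big1 // => p /s_hom[h1 h2]; rewrite mulmxA.
exact: Delta0 h2 (hecke_homM hH h1).
Qed.

Lemma Delta_n_surj (beta : 'M[K]_(d ^ n, d' ^ n) -> 'M[K]_(d'' ^ n, d ^ n) -> K) :
  bilin_form beta -> cotensor_n n R R' R'' beta ->
  exists phi : 'M[K]_(d'' ^ n, d' ^ n) -> K, lin_form phi /\
    forall F G, hecke_hom n R R' F -> hecke_hom n R'' R G -> Delta_n d phi F G = beta F G.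
Proof.
move=> [beta_lin1 beta_lin2] beta_cot.
exists (fun X => \sum_(p <- s) beta p.2 (X *m p.1)); split.
  move=> c X Y; rewrite mulr_sumr -big_split; apply: eq_bigr => p _ /=.
  by rewrite mulmxDl -scalemxAl beta_lin2.
move=> F G hF hG; rewrite /Delta_n.
transitivity (\sum_(p <- s) beta (F *m p.1 *m p.2) G).
  rewrite !big_seq; apply: eq_bigr => p /s_hom[h1 h2].
  by rewrite (beta_cot _ _ _ h2 (hecke_homM hF h1) hG) mulmxA.
rewrite -(lin_form_sum (beta_lin1 G) _ (fun p => F *m p.1 *m p.2)).
under eq_bigr do rewrite -mulmxA.
by rewrite -mulmx_sumr s_id mulmx1.
Qed.

End DeltaInverse.

Unset Implicit Arguments.

Theorem lemma7p1 (K : fieldType) (q : K) (d d' d'' : nat)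
  (R : 'M[K]_(d * d)) (R' : 'M[K]_(d' * d')) (R'' : 'M[K]_(d'' * d''))
  (hR : hecke_symmetry q R) (hR' : hecke_symmetry q R') (hR'' : hecke_symmetry q R'')
  (hsum : forall n : nat, (1 < n)%N ->
     forall U : 'M[K]_(d' ^ n), hecke_indec_summand n R' U ->
       exists U' : 'M[K]_(d ^ n), hecke_summand n R U' /\ hecke_submod_iso n R' R U U') :
  forall n : nat,
    (* Delta maps A_n(R',R'') into the cotensor product *)
    (forall phi : 'M[K]_(d'' ^ n, d' ^ n) -> K, lin_form phi ->
       cotensor_n n R R' R'' (Delta_n d phi)) /\
    (* Delta is injective on A_n(R',R'') = Hom_{H_n}(V''^n, V'^n)^* *)
    (forall phi : 'M[K]_(d'' ^ n, d' ^ n) -> K, lin_form phi ->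
       (forall F G, hecke_hom n R R' F -> hecke_hom n R'' R G -> Delta_n d phi F G = 0) ->
       forall H, hecke_hom n R'' R' H -> phi H = 0) /\
    (* every element of the cotensor product is in the image of Delta *)
    (forall beta : 'M[K]_(d ^ n, d' ^ n) -> 'M[K]_(d'' ^ n, d ^ n) -> K,
       bilin_form beta -> cotensor_n n R R' R'' beta ->
       exists phi : 'M[K]_(d'' ^ n, d' ^ n) -> K, lin_form phi /\
         forall F G, hecke_hom n R R' F -> hecke_hom n R'' R G ->
           Delta_n d phi F G = beta F G).
Proof.
have retract n : (1 < n)%N ->
    factors_through (hecke_gen n) (hecke_ops n R') (hecke_ops n R) 1%:M.
  by move=> n_gt1; apply: summand_factors_through (hsum n n_gt1) _ (summand1 _ _).
move=> n; have [s s_hom] : factors_through (hecke_gen n) (hecke_ops n R') (hecke_ops n R) 1%:M.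
  case: (ltnP 1 n) => [/retract // | n_le1].
  apply: factors_through1_nogen => [i /leq_trans /(_ n_le1) //|].
  have := factors_through1_pos (retract 2 isT).
  by case: n n_le1 => [|[|//]] _; rewrite ?expn0 ?expn1 // !expn_gt0 !orbF.
rewrite mul1mx => s_id.
split; first by move=> phi _; apply: Delta_n_cotensor.
by split; [apply: Delta_n_inj s_hom s_id | apply: Delta_n_surj s_hom s_id].
Qed.
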